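(* Let $k$ be a complex number with $\Re(k)>0$. Then, as the integer $n\to\infty$, $$\int_{0}^{1}(1-u)^k\left(1-\cos 2\pi n u\right)\cot(\pi u)\,du=\frac{\gamma+\log n}{\pi}-\int_{0}^{1}(u^k-u)\cot(\pi u)\,du+o(1).$$
   Context: $\gamma$ is the Euler–Mascheroni constant. *)

From Stdlib Require Import Reals Lra.
Open Scope R_scope.

Definition harmonic (n : nat) : R := sum_f 1 n (fun j => / INR j).

Definition is_euler_gamma (g : R) : Prop :=
  Un_cv (fun n => harmonic n - ln (INR n)) g.

Definition improper_int01 (f : R -> R) (l : R) : Prop :=
  (forall a b, 0 < a -> a < b -> b < 1 -> inhabited (Riemann_integrable f a b)) /\
  (forall eps, 0 < eps -> exists delta, 0 < delta /\
     forall a b (pr : Riemann_integrable f a b),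
       0 < a -> a < delta -> 1 - delta < b -> b < 1 -> a < b ->
       Rabs (RiemannInt pr - l) < eps).

(* Complex power x^k for x > 0 and k = kr + i ki:
   x^k = exp(k ln x) = x^kr (cos(ki ln x) + i sin(ki ln x)). *)
Definition cpow_re (x kr ki : R) : R := Rpower x kr * cos (ki * ln x).
Definition cpow_im (x kr ki : R) : R := Rpower x kr * sin (ki * ln x).

Definition cot (x : R) : R := cos x / sin x.

Definition F_re (kr ki : R) (n : nat) (u : R) : R :=
  cpow_re (1 - u) kr ki * (1 - cos (2 * PI * INR n * u)) * cot (PI * u).
Definition F_im (kr ki : R) (n : nat) (u : R) : R :=
  cpow_im (1 - u) kr ki * (1 - cos (2 * PI * INR n * u)) * cot (PI * u).

Definition G_re (kr ki : R) (u : R) : R :=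
  (cpow_re u kr ki - u) * cot (PI * u).
Definition G_im (kr ki : R) (u : R) : R :=
  cpow_im u kr ki * cot (PI * u).

From Stdlib Require Import Reals Lra Lia.
From Coquelicot Require Import Coquelicot.
Open Scope R_scope.

(* Let P be the real or imaginary part of x |-> x^k and c = P 1 (that is, 1 or 0). Then
     (1-u)^k (1 - cos 2πnu) cot πu = h u (1 - cos 2πnu) + c (1-u) (1 - cos 2πnu) cot πu
   with h u = (P (1-u) - c (1-u)) cot πu. Near both endpoints h is O(u^(p-1)) with
   p = min (Re k) 1, so h is improperly integrable on (0,1), the Riemann–Lebesgue lemma kills
   the integral of h cos 2πnu, and the reflection u |-> 1-u turns the integral of h into
   -∫ (P u - c u) cot πu. In the last term,
     (1 - cos 2πnu) cot πu = 2 Σ_(j<=n) sin 2πju - sin 2πnu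
   and ∫ (1-u) sin 2πju = 1/(2πj), so it integrates to H_n/π - 1/(2πn) = (γ + log n)/π + o(1). *)

Lemma sin_le_id x : 0 <= x -> sin x <= x.
Proof.
  intros Hx. destruct (Rle_lt_dec x PI) as [HxPI|HxPI].
  - destruct (sin_bound x 0 Hx HxPI) as [_ Hub]. unfold sin_approx in Hub.
    cbn [sum_f_R0 Nat.mul Nat.add] in Hub. unfold sin_term in Hub.
    rewrite !INR_IZR_INZ in Hub. cbn in Hub.
    pose proof PI_4. assert (x * x <= 16) by nra.
    assert (0 <= x * x * x) by (repeat apply Rmult_le_pos; lra).
    nra.
  - pose proof (SIN_bound x). pose proof PI2_3_2. lra.
Qed.

Lemma Rabs_sin_le x : Rabs (sin x) <= Rabs x.
Proof.
  assert (Hpos : forall y, 0 <= y -> Rabs (sin y) <= y).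
  { intros y Hy. destruct (Rle_lt_dec y PI) as [HyPI|HyPI].
    - rewrite Rabs_right by (apply Rle_ge, sin_ge_0; lra). now apply sin_le_id.
    - pose proof (SIN_bound y). pose proof PI2_3_2. apply Rabs_le; lra. }
  destruct (Rle_lt_dec 0 x) as [Hx|Hx].
  - rewrite (Rabs_right x) by lra. now apply Hpos.
  - rewrite <- Rabs_Ropp, <- sin_neg, (Rabs_left x) by lra. apply Hpos; lra.
Qed.

Lemma Rabs_cos_sub1_le x : Rabs (cos x - 1) <= Rabs x.
Proof.
  replace x with (2 * (x / 2)) at 1 by field. rewrite cos_2a_sin.
  replace (1 - 2 * sin (x / 2) * sin (x / 2) - 1) with (- (2 * (sin (x / 2) * sin (x / 2)))) by ring.
  rewrite Rabs_Ropp, !Rabs_mult, (Rabs_right 2) by lra.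
  pose proof (Rabs_sin_le (x / 2)). pose proof (SIN_bound (x / 2)).
  assert (Rabs (sin (x / 2)) <= 1) by (apply Rabs_le; lra).
  assert (Rabs (x / 2) = Rabs x / 2) by (unfold Rdiv; rewrite Rabs_mult, (Rabs_right (/ 2)); lra).
  pose proof (Rabs_pos (sin (x / 2))). nra.
Qed.

Lemma ln_nonpos x : 0 < x <= 1 -> ln x <= 0.
Proof.
  intros Hx. rewrite <- ln_1.
  destruct (Req_dec x 1) as [->|Hx1]; [lra|left; apply ln_increasing; lra].
Qed.

Lemma ln_le_sub1 y : 0 < y -> ln y <= y - 1.
Proof. intros Hy. pose proof (exp_ineq1_le (ln y)). rewrite exp_ln in H by lra. lra. Qed.

Lemma Rabs_ln_le_near1 x : 1 / 2 <= x <= 1 -> Rabs (ln x) <= 2 * (1 - x).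
Proof.
  intros Hx. rewrite Rabs_left1 by (apply ln_nonpos; lra).
  pose proof (ln_le_sub1 (/ x) ltac:(apply Rinv_0_lt_compat; lra)) as Hinv.
  rewrite ln_Rinv in Hinv by lra.
  assert (/ x - 1 <= 2 * (1 - x)).
  { apply Rmult_le_reg_l with x; [lra|]. field_simplify; nra. }
  lra.
Qed.

Lemma exp_le_exp_of_le a b : a <= b -> exp a <= exp b.
Proof. intros [Hab| ->]; [left; now apply exp_increasing|lra]. Qed.

Lemma Rpower_pos x y : 0 < Rpower x y.
Proof. apply exp_pos. Qed.

Lemma Rpower_antitone_exp x y z : 0 < x <= 1 -> y <= z -> Rpower x z <= Rpower x y.
Proof.
  intros Hx Hyz. apply exp_le_exp_of_le. pose proof (ln_nonpos x Hx). nra.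
Qed.

Lemma Rpower_ge_1 x y : 0 < x <= 1 -> y <= 0 -> 1 <= Rpower x y.
Proof. intros Hx Hy. rewrite <- (Rpower_O x) by lra. now apply Rpower_antitone_exp. Qed.

Lemma Rabs_Rpower_sub1_le x k : 1 / 2 <= x <= 1 -> 0 <= k ->
  Rabs (Rpower x k - 1) <= 2 * k * (1 - x).
Proof.
  intros Hx Hk. pose proof (Rabs_ln_le_near1 x Hx) as Hln.
  pose proof (ln_nonpos x ltac:(lra)).
  rewrite Rabs_left1 in Hln by lra.
  pose proof (exp_ineq1_le (k * ln x)).
  assert (exp (k * ln x) <= 1) by (rewrite <- exp_0; apply exp_le_exp_of_le; nra).
  unfold Rpower. rewrite Rabs_left1 by lra. nra.
Qed.

Lemma sin_ge_quarter x : 0 <= x <= PI / 2 -> x / 4 <= sin x.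
Proof.
  intros Hx. pose proof PI_4.
  destruct (sin_bound x 0) as [Hlb _]; try lra.
  unfold sin_approx in Hlb. cbn [sum_f_R0 Nat.mul Nat.add] in Hlb. unfold sin_term in Hlb.
  rewrite !INR_IZR_INZ in Hlb. cbn in Hlb.
  assert (x * x <= 4) by nra. assert (0 <= x * x * x) by (repeat apply Rmult_le_pos; lra).
  nra.
Qed.

Lemma sin_PI_mul_ge u : 0 < u <= 1 / 2 -> u / 2 <= sin (PI * u).
Proof.
  intros Hu. pose proof PI2_3_2.
  pose proof (sin_ge_quarter (PI * u) ltac:(split; nra)). nra.
Qed.

Lemma cot_PI_reflect u : cot (PI * (1 - u)) = - cot (PI * u).
Proof.
  unfold cot. replace (PI * (1 - u)) with (PI - PI * u) by ring.
  rewrite sin_PI_x, Rtrigo_facts.cos_pi_minus. unfold Rdiv. ring.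
Qed.

Lemma Rabs_cot_PI_le u : 0 < u <= 1 / 2 -> Rabs (cot (PI * u)) <= 2 / u.
Proof.
  intros Hu. pose proof (sin_PI_mul_ge u Hu).
  unfold cot, Rdiv. rewrite Rabs_mult, Rabs_inv, (Rabs_right (sin _)) by lra.
  pose proof (COS_bound (PI * u)).
  assert (Rabs (cos (PI * u)) <= 1) by (apply Rabs_le; lra).
  assert (/ sin (PI * u) <= / (u / 2)) by (apply Rinv_le_contravar; lra).
  replace (2 * / u) with (/ (u / 2)) by (field; lra).
  pose proof (Rinv_0_lt_compat (sin (PI * u)) ltac:(lra)).
  pose proof (Rabs_pos (cos (PI * u))). nra.
Qed.

Lemma Rabs_cot_PI_le_near1 u : 1 / 2 <= u < 1 -> Rabs (cot (PI * u)) <= 2 / (1 - u).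
Proof.
  intros Hu. replace u with (1 - (1 - u)) at 1 by ring.
  rewrite cot_PI_reflect, Rabs_Ropp. apply Rabs_cot_PI_le; lra.
Qed.

Lemma continuous_of_ex_derive (f : R -> R) x : ex_derive f x -> continuous f x.
Proof. apply (@ex_derive_continuous R_AbsRing R_NormedModule). Qed.

Lemma continuous_reflect (f : R -> R) x :
  continuous f (1 - x) -> continuous (fun u => f (1 - u)) x.
Proof.
  intros Hf. apply (continuous_comp (fun u : R => 1 - u) f); [|exact Hf].
  apply continuous_of_ex_derive. auto_derive. auto.
Qed.

Lemma ex_RInt_of_continuous (f : R -> R) a b :
  a <= b -> (forall x, a <= x <= b -> continuous f x) -> ex_RInt f a b.
Proof.
  intros Hab Hf. apply (@ex_RInt_continuous R_CompleteNormedModule). intros z Hz.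
  rewrite Rmin_left, Rmax_right in Hz by lra. now apply Hf.
Qed.

(* Coquelicot's generic integral lemmas, restated with [Rplus] and [Rmult] so that they
   rewrite integrals of real functions. *)
Lemma RInt_Chasles_R (f : R -> R) a b c :
  ex_RInt f a b -> ex_RInt f b c -> RInt f a b + RInt f b c = RInt f a c.
Proof. exact (RInt_Chasles f a b c). Qed.

Lemma RInt_scal_R (f : R -> R) c a b :
  ex_RInt f a b -> RInt (fun x => c * f x) a b = c * RInt f a b.
Proof. exact (RInt_scal f a b c). Qed.

Lemma RInt_plus_R (f g : R -> R) a b : ex_RInt f a b -> ex_RInt g a b ->
  RInt (fun x => f x + g x) a b = RInt f a b + RInt g a b.
Proof. exact (RInt_plus f g a b). Qed.

Lemma RInt_minus_R (f g : R -> R) a b : ex_RInt f a b -> ex_RInt g a b ->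
  RInt (fun x => f x - g x) a b = RInt f a b - RInt g a b.
Proof. exact (RInt_minus f g a b). Qed.

Lemma RInt_reflect (f : R -> R) a b : ex_RInt f (1 - b) (1 - a) ->
  RInt (fun u => f (1 - u)) a b = RInt f (1 - b) (1 - a).
Proof.
  intros Hf.
  assert (Hf' : ex_RInt f (-1 * a + 1) (-1 * b + 1)).
  { replace (-1 * a + 1) with (1 - a) by ring. replace (-1 * b + 1) with (1 - b) by ring.
    now apply ex_RInt_swap. }
  rewrite (RInt_ext _ (fun y => opp (scal (-1) (f (-1 * y + 1))))).
  2:{ intros x _. replace (-1 * x + 1) with (1 - x) by ring.
      change (f (1 - x) = - (-1 * f (1 - x))). ring. }
  etransitivity; [exact (RInt_opp _ a b (ex_RInt_comp_lin f (-1) 1 a b Hf'))|].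
  etransitivity; [apply f_equal; exact (RInt_comp_lin f (-1) 1 a b Hf')|].
  etransitivity; [exact (opp_RInt_swap f _ _ Hf')|].
  f_equal; ring.
Qed.

Lemma is_RInt_Rpower a b p : 0 < a <= b -> 0 < p ->
  is_RInt (fun t => Rpower t (p - 1)) a b ((Rpower b p - Rpower a p) / p).
Proof.
  intros Hab Hp.
  replace ((Rpower b p - Rpower a p) / p) with (minus (/ p * Rpower b p) (/ p * Rpower a p))
    by (unfold minus, plus, opp; simpl; field; lra).
  apply (is_RInt_derive (fun t => / p * Rpower t p)).
  - intros x Hx. rewrite Rmin_left, Rmax_right in Hx by lra.
    apply is_derive_Reals.
    replace (Rpower x (p - 1)) with (/ p * (p * Rpower x (p - 1))) by (field; lra).
    apply (derivable_pt_lim_scal (fun t => Rpower t p)), derivable_pt_lim_power; lra.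
  - intros x Hx. rewrite Rmin_left, Rmax_right in Hx by lra.
    apply continuous_of_ex_derive. exists ((p - 1) * Rpower x (p - 1 - 1)).
    apply is_derive_Reals, derivable_pt_lim_power; lra.
Qed.

Lemma Rabs_RInt_le_Rpower (f : R -> R) M p a b : 0 < p -> 0 < a <= b ->
  (forall x, a <= x <= b -> continuous f x) ->
  (forall x, a <= x <= b -> Rabs (f x) <= M * Rpower x (p - 1)) ->
  Rabs (RInt f a b) <= M * (Rpower b p - Rpower a p) / p.
Proof.
  intros Hp Hab Hc Hb.
  assert (Hi : is_RInt (fun t => M * Rpower t (p - 1)) a b (M * ((Rpower b p - Rpower a p) / p)))
    by exact (is_RInt_scal _ a b M _ (is_RInt_Rpower a b p Hab Hp)).
  eapply Rle_trans; [apply abs_RInt_le; [lra|now apply ex_RInt_of_continuous]|].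
  replace (M * (Rpower b p - Rpower a p) / p) with (RInt (fun t => M * Rpower t (p - 1)) a b)
    by (rewrite (is_RInt_unique _ _ _ _ Hi); simpl; unfold Rdiv; ring).
  apply RInt_le; [lra| |eexists; exact Hi|intros x Hx; apply Hb; lra].
  apply ex_RInt_of_continuous; [lra|]. intros x Hx. apply continuous_Rabs_comp. now apply Hc.
Qed.

Lemma Rpower_mul_small p K eps : 0 < p -> 0 < eps ->
  exists d, 0 < d /\ forall a, 0 < a < d -> K * Rpower a p < eps.
Proof.
  intros Hp He. set (eta := eps / (Rabs K + 1)).
  assert (Heta : 0 < eta) by (apply Rdiv_lt_0_compat; pose proof (Rabs_pos K); lra).
  exists (Rpower eta (/ p)). split; [apply Rpower_pos|].
  intros a Ha.
  assert (Hap : Rpower a p < eta).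
  { replace eta with (Rpower (Rpower eta (/ p)) p)
      by (rewrite Rpower_mult, Rinv_l, Rpower_1; lra).
    apply Rlt_Rpower_l; lra. }
  pose proof (Rle_abs K). pose proof (Rabs_pos K). pose proof (Rpower_pos a p).
  assert (Rabs K * eta < eps)
    by (unfold eta; apply Rmult_lt_reg_r with (Rabs K + 1); [lra|field_simplify; lra]).
  nra.
Qed.

Lemma exists_nat_gt x : exists N : nat, x < INR N.
Proof.
  destruct (nfloor_ex (Rabs x) (Rabs_pos x)) as [n Hn]. exists (S n).
  rewrite S_INR. pose proof (Rle_abs x). lra.
Qed.

Lemma exists_lim_near0_of_cauchy (F g : R -> R) c : 0 < c ->
  (forall eps, 0 < eps -> exists d, 0 < d /\ forall y, 0 < y < d -> g y < eps) ->
  (forall x y, 0 < x <= y -> y <= c -> Rabs (F x - F y) <= g y) ->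
  {l | forall a, 0 < a <= c -> Rabs (l - F a) <= g a}.
Proof.
  intros Hc Hg HF.
  set (pt := fun m : nat => c / (INR m + 1)).
  assert (Hpt : forall m, 0 < pt m <= c).
  { intros m. pose proof (pos_INR m). unfold pt. split; [apply Rdiv_lt_0_compat; lra|].
    apply Rmult_le_reg_r with (INR m + 1); [lra|]. field_simplify; nra. }
  assert (Hanti : forall m k, (m <= k)%nat -> pt k <= pt m).
  { intros m k Hmk%le_INR. pose proof (pos_INR m). unfold pt, Rdiv.
    apply Rmult_le_compat_l; [lra|apply Rinv_le_contravar; lra]. }
  assert (Hsmall : forall d, 0 < d -> exists N, forall m, (N <= m)%nat -> pt m < d).
  { intros d Hd. destruct (exists_nat_gt (c / d)) as [N HN]. exists N. intros m Hm%le_INR.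
    pose proof (pos_INR N). unfold pt.
    apply Rmult_lt_reg_r with ((INR m + 1) / d); [apply Rdiv_lt_0_compat; lra|].
    replace (c / (INR m + 1) * ((INR m + 1) / d)) with (c / d) by (field; lra).
    replace (d * ((INR m + 1) / d)) with (INR m + 1) by (field; lra). lra. }
  set (s := fun m => F (pt m)).
  assert (Hcau : Cauchy_crit s).
  { intros eps He. destruct (Hg eps He) as [d [Hd Hgd]]. destruct (Hsmall d Hd) as [N HN].
    assert (Hle : forall n m, (N <= n)%nat -> (n <= m)%nat -> Rabs (s m - s n) < eps).
    { intros n m Hn Hnm. eapply Rle_lt_trans.
      - apply HF; [split; [apply Hpt|now apply Hanti]|apply Hpt].
      - apply Hgd. split; [apply Hpt|now apply HN]. }
    exists N. intros n m Hn Hm. unfold R_dist.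
    destruct (Nat.le_ge_cases n m).
    - rewrite Rabs_minus_sym. now apply Hle.
    - now apply Hle. }
  destruct (Rcomplete.R_complete s Hcau) as [l Hl].
  exists l. intros a Ha. apply Rle_plus_epsilon. intros eps He.
  destruct (Hl eps He) as [N1 HN1]. destruct (Hsmall a) as [N2 HN2]; [lra|].
  specialize (HN1 (max N1 N2) ltac:(lia)). specialize (HN2 (max N1 N2) ltac:(lia)).
  pose proof (HF (pt (max N1 N2)) a ltac:(split; [apply Hpt|lra]) ltac:(lra)).
  unfold R_dist, s in HN1.
  replace (l - F a) with ((F (pt (max N1 N2)) - F a) - (F (pt (max N1 N2)) - l)) by ring.
  eapply Rle_trans; [apply Rabs_triang|]. rewrite Rabs_Ropp. lra.
Qed.

Lemma RInt_near0_limit (f : R -> R) M p c : 0 < p -> 0 < c ->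
  (forall t, 0 < t <= c -> continuous f t) ->
  (forall t, 0 < t <= c -> Rabs (f t) <= M * Rpower t (p - 1)) ->
  {l | forall a, 0 < a <= c -> Rabs (l - RInt f a c) <= M / p * Rpower a p}.
Proof.
  intros Hp Hc Hf Hb.
  assert (HM : 0 <= M).
  { pose proof (Hb c ltac:(lra)). pose proof (Rabs_pos (f c)). pose proof (Rpower_pos c (p - 1)). nra. }
  apply exists_lim_near0_of_cauchy;
    [exact Hc|intros eps He; exact (Rpower_mul_small p (M / p) eps Hp He)|].
  intros x y Hxy Hyc.
  rewrite <- (RInt_Chasles_R f x y c) by (apply ex_RInt_of_continuous; [lra|intros; apply Hf; lra]).
  unfold Rminus. rewrite Rplus_assoc, Rplus_opp_r, Rplus_0_r.
  eapply Rle_trans.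
  - apply (Rabs_RInt_le_Rpower f M p); [lra|lra|intros; apply Hf; lra|intros; apply Hb; lra].
  - pose proof (Rpower_pos x p). pose proof (Rinv_0_lt_compat p Hp).
    assert (0 <= M * / p * Rpower x p) by (repeat apply Rmult_le_pos; lra).
    unfold Rdiv. nra.
Qed.

Definition continuous_open01 (f : R -> R) : Prop := forall x, 0 < x < 1 -> continuous f x.

Definition is_RInt_open01 (f : R -> R) (l : R) : Prop :=
  (forall a b, 0 < a -> a < b -> b < 1 -> ex_RInt f a b) /\
  (forall eps, 0 < eps -> exists delta, 0 < delta /\
     forall a b, 0 < a -> a < delta -> 1 - delta < b -> b < 1 -> a < b ->
       Rabs (RInt f a b - l) < eps).

Lemma improper_int01_of_is_RInt_open01 f l : is_RInt_open01 f l -> improper_int01 f l.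
Proof.
  intros [Hex Hlim]. split.
  - intros a b Ha Hab Hb. constructor. apply ex_RInt_Reals_0. now apply Hex.
  - intros eps He. destruct (Hlim eps He) as [d [Hd Hd']]. exists d. split; [exact Hd|].
    intros a b pr Ha Had Hbd Hb Hab. rewrite <- RInt_Reals. now apply Hd'.
Qed.

Lemma is_RInt_open01_ext (f g : R -> R) l :
  (forall x, 0 < x < 1 -> f x = g x) -> is_RInt_open01 f l -> is_RInt_open01 g l.
Proof.
  intros Hfg [Hex Hlim]. split.
  - intros a b Ha Hab Hb. apply (ex_RInt_ext f); [|now apply Hex].
    intros x Hx. rewrite Rmin_left, Rmax_right in Hx by lra. apply Hfg; lra.
  - intros eps He. destruct (Hlim eps He) as [d [Hd Hd']]. exists d. split; [exact Hd|].
    intros a b Ha Had Hbd Hb Hab. rewrite <- (RInt_ext f); [now apply Hd'|].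
    intros x Hx. rewrite Rmin_left, Rmax_right in Hx by lra. apply Hfg; lra.
Qed.

Lemma is_RInt_open01_plus f g l1 l2 : is_RInt_open01 f l1 -> is_RInt_open01 g l2 ->
  is_RInt_open01 (fun x => f x + g x) (l1 + l2).
Proof.
  intros [Fex Flim] [Gex Glim]. split.
  - intros a b Ha Hab Hb. apply (ex_RInt_plus f g); auto.
  - intros eps He.
    destruct (Flim (eps / 2)) as [d1 [Hd1 Hd1']]; [lra|].
    destruct (Glim (eps / 2)) as [d2 [Hd2 Hd2']]; [lra|].
    exists (Rmin d1 d2). split; [now apply Rmin_pos|].
    intros a b Ha Had Hbd Hb Hab. pose proof (Rmin_l d1 d2). pose proof (Rmin_r d1 d2).
    rewrite RInt_plus_R by auto.
    specialize (Hd1' a b Ha ltac:(lra) ltac:(lra) Hb Hab).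
    specialize (Hd2' a b Ha ltac:(lra) ltac:(lra) Hb Hab).
    replace (RInt f a b + RInt g a b - (l1 + l2)) with ((RInt f a b - l1) + (RInt g a b - l2)) by ring.
    eapply Rle_lt_trans; [apply Rabs_triang|lra].
Qed.

Lemma is_RInt_open01_scal f c l : is_RInt_open01 f l -> is_RInt_open01 (fun x => c * f x) (c * l).
Proof.
  intros [Fex Flim]. split.
  - intros a b Ha Hab Hb. apply (ex_RInt_scal f); auto.
  - intros eps He. pose proof (Rabs_pos c).
    destruct (Flim (eps / (Rabs c + 1))) as [d [Hd Hd']]; [apply Rdiv_lt_0_compat; lra|].
    exists d. split; [exact Hd|]. intros a b Ha Had Hbd Hb Hab.
    specialize (Hd' a b Ha Had Hbd Hb Hab).
    rewrite RInt_scal_R by auto.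
    replace (c * RInt f a b - c * l) with (c * (RInt f a b - l)) by ring.
    rewrite Rabs_mult. pose proof (Rabs_pos (RInt f a b - l)).
    assert (Rabs c * (eps / (Rabs c + 1)) < eps)
      by (apply Rmult_lt_reg_r with (Rabs c + 1); [lra|field_simplify; lra]).
    nra.
Qed.

Lemma is_RInt_open01_reflect f l : continuous_open01 f -> is_RInt_open01 f l ->
  is_RInt_open01 (fun u => f (1 - u)) l.
Proof.
  intros Hc [Fex Flim]. split.
  - intros a b Ha Hab Hb. apply ex_RInt_of_continuous; [lra|].
    intros x Hx. apply continuous_reflect, Hc; lra.
  - intros eps He. destruct (Flim eps He) as [d [Hd Hd']]. exists d. split; [exact Hd|].
    intros a b Ha Had Hbd Hb Hab. rewrite RInt_reflect by (apply Fex; lra).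
    apply Hd'; lra.
Qed.

Lemma is_RInt_open01_of_bound (f : R -> R) K p l : 0 < p -> continuous_open01 f ->
  (forall a b, 0 < a <= 1 / 2 -> 1 / 2 <= b < 1 ->
     Rabs (l - RInt f a b) <= K * Rpower a p + K * Rpower (1 - b) p) ->
  is_RInt_open01 f l.
Proof.
  intros Hp Hc Hbound. split.
  - intros a b Ha Hab Hb. apply ex_RInt_of_continuous; [lra|]. intros; apply Hc; lra.
  - intros eps He. destruct (Rpower_mul_small p K (eps / 2) Hp) as [d [Hd Hd']]; [lra|].
    exists (Rmin d (1 / 2)). split; [apply Rmin_pos; lra|].
    intros a b Ha Had Hbd Hb Hab. pose proof (Rmin_l d (1 / 2)). pose proof (Rmin_r d (1 / 2)).
    rewrite Rabs_minus_sym. eapply Rle_lt_trans; [apply Hbound; lra|].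
    pose proof (Hd' a ltac:(lra)). pose proof (Hd' (1 - b) ltac:(lra)). lra.
Qed.

Lemma is_RInt_open01_of_is_RInt (f : R -> R) v :
  (forall x, 0 <= x <= 1 -> continuous f x) -> is_RInt f 0 1 v -> is_RInt_open01 f v.
Proof.
  intros Hc Hv.
  destruct (continuity_ab_maj (fun x => Rabs (f x)) 0 1) as [xm [HM _]]; [lra| |].
  { intros x Hx. apply continuity_pt_filterlim, continuous_Rabs_comp. now apply Hc. }
  assert (Hex : forall a b, 0 <= a <= b -> b <= 1 -> ex_RInt f a b)
    by (intros; apply ex_RInt_of_continuous; [lra|intros; apply Hc; lra]).
  apply (is_RInt_open01_of_bound f (Rabs (f xm)) 1); [lra|intros x Hx; apply Hc; lra|].
  intros a b Ha Hb. rewrite !Rpower_1 by lra.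
  rewrite <- (is_RInt_unique _ _ _ _ Hv).
  rewrite <- (RInt_Chasles_R f 0 a 1), <- (RInt_Chasles_R f a b 1) by (apply Hex; lra).
  replace (RInt f 0 a + (RInt f a b + RInt f b 1) - RInt f a b) with (RInt f 0 a + RInt f b 1) by ring.
  assert (H0a : Rabs (RInt f 0 a) <= (a - 0) * Rabs (f xm))
    by (apply abs_RInt_le_const; [lra|apply Hex; lra|intros; apply HM; lra]).
  assert (Hb1 : Rabs (RInt f b 1) <= (1 - b) * Rabs (f xm))
    by (apply abs_RInt_le_const; [lra|apply Hex; lra|intros; apply HM; lra]).
  eapply Rle_trans; [apply Rabs_triang|lra].
Qed.

Definition endpoint_dominated (f : R -> R) (M p : R) : Prop :=
  (forall x, 0 < x <= 1 / 2 -> Rabs (f x) <= M * Rpower x (p - 1)) /\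
  (forall x, 1 / 2 <= x < 1 -> Rabs (f x) <= M * Rpower (1 - x) (p - 1)).

Lemma is_RInt_open01_of_dominated (f : R -> R) M p : 0 < p -> continuous_open01 f ->
  endpoint_dominated f M p ->
  {l | is_RInt_open01 f l /\ forall a b, 0 < a <= 1 / 2 -> 1 / 2 <= b < 1 ->
       Rabs (l - RInt f a b) <= M / p * Rpower a p + M / p * Rpower (1 - b) p}.
Proof.
  intros Hp Hc [Hdom0 Hdom1].
  destruct (RInt_near0_limit f M p (1 / 2) Hp) as [l0 Hl0];
    [lra|intros; apply Hc; lra|exact Hdom0|].
  destruct (RInt_near0_limit (fun u => f (1 - u)) M p (1 / 2) Hp) as [l1 Hl1];
    [lra|intros; apply continuous_reflect, Hc; lra|
     intros t Ht; replace t with (1 - (1 - t)) at 2 by ring; apply Hdom1; lra|].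
  assert (Hbound : forall a b, 0 < a <= 1 / 2 -> 1 / 2 <= b < 1 ->
    Rabs (l0 + l1 - RInt f a b) <= M / p * Rpower a p + M / p * Rpower (1 - b) p).
  { intros a b Ha Hb. specialize (Hl0 a Ha). specialize (Hl1 (1 - b) ltac:(lra)).
    rewrite RInt_reflect in Hl1 by (apply ex_RInt_of_continuous; [lra|intros; apply Hc; lra]).
    replace (1 - (1 - b)) with b in Hl1 by ring. replace (1 - 1 / 2) with (1 / 2) in Hl1 by field.
    rewrite <- (RInt_Chasles_R f a (1 / 2) b)
      by (apply ex_RInt_of_continuous; [lra|intros; apply Hc; lra]).
    replace (l0 + l1 - (RInt f a (1 / 2) + RInt f (1 / 2) b))
      with ((l0 - RInt f a (1 / 2)) + (l1 - RInt f (1 / 2) b)) by ring.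
    eapply Rle_trans; [apply Rabs_triang|lra]. }
  exists (l0 + l1). split; [|exact Hbound].
  exact (is_RInt_open01_of_bound f (M / p) p _ Hp Hc Hbound).
Qed.

Lemma Rabs_mul_cos_le x y : Rabs (x * cos y) <= Rabs x.
Proof.
  rewrite Rabs_mult. pose proof (COS_bound y).
  assert (Rabs (cos y) <= 1) by (apply Rabs_le; lra).
  pose proof (Rabs_pos x). pose proof (Rabs_pos (cos y)). nra.
Qed.

Lemma continuous_cos_mul lam x : continuous (fun u => cos (lam * u)) x.
Proof. apply continuous_of_ex_derive. auto_derive. auto. Qed.

(* Shifting by half a period π/λ changes the sign of cos (λ u). *)
Lemma RInt_mul_cos_shift (f : R -> R) a b lam : 0 < lam -> a + PI / lam <= b ->
  (forall x, a <= x <= b -> continuous f x) ->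
  2 * RInt (fun u => f u * cos (lam * u)) a b =
  RInt (fun u => (f u - f (u + PI / lam)) * cos (lam * u)) a (b - PI / lam)
  + RInt (fun u => f u * cos (lam * u)) a (a + PI / lam)
  + RInt (fun u => f u * cos (lam * u)) (b - PI / lam) b.
Proof.
  intros Hlam Hab Hf. pose proof PI_RGT_0.
  set (d := PI / lam) in *. assert (Hd : 0 < d) by (apply Rdiv_lt_0_compat; lra).
  set (phi := fun u => f u * cos (lam * u)).
  set (psi := fun u => f (u + d) * cos (lam * u)).
  assert (Hphi : forall x y, a <= x <= y -> y <= b -> ex_RInt phi x y).
  { intros x y Hxy Hy. apply ex_RInt_of_continuous; [lra|]. intros t Ht.
    apply (continuous_mult f (fun u => cos (lam * u))); [apply Hf; lra|apply continuous_cos_mul]. }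
  assert (Hpsi : ex_RInt psi a (b - d)).
  { apply ex_RInt_of_continuous; [lra|]. intros t Ht.
    apply (continuous_mult (fun u => f (u + d)) (fun u => cos (lam * u)));
      [|apply continuous_cos_mul].
    apply (continuous_comp (fun u => u + d) f); [apply continuous_of_ex_derive; auto_derive; auto|].
    apply Hf; lra. }
  assert (Hshift : RInt phi (a + d) b = - RInt psi a (b - d) :> R).
  { assert (E := RInt_comp_lin phi 1 d a (b - d)).
    replace (1 * a + d) with (a + d) in E by ring. replace (1 * (b - d) + d) with b in E by ring.
    rewrite <- E by (apply Hphi; lra).
    replace (- RInt psi a (b - d)) with (-1 * RInt psi a (b - d)) by ring.
    rewrite <- RInt_scal_R by exact Hpsi.
    apply RInt_ext. intros x _. unfold phi, psi.
    replace (lam * (1 * x + d)) with (lam * x + PI) by (unfold d; field; lra).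
    rewrite neg_cos. change (1 * (f (1 * x + d) * - cos (lam * x)) = -1 * (f (x + d) * cos (lam * x))).
    rewrite Rmult_1_l, Rmult_1_l. ring. }
  assert (Hdiff : RInt (fun u => (f u - f (u + d)) * cos (lam * u)) a (b - d)
                  = RInt phi a (b - d) - RInt psi a (b - d) :> R).
  { rewrite <- RInt_minus_R by first [exact Hpsi|apply Hphi; lra].
    apply RInt_ext. intros x _. apply Rmult_minus_distr_r. }
  pose proof (RInt_Chasles_R phi a (b - d) b ltac:(apply Hphi; lra) ltac:(apply Hphi; lra)).
  pose proof (RInt_Chasles_R phi a (a + d) b ltac:(apply Hphi; lra) ltac:(apply Hphi; lra)).
  fold phi. lra.
Qed.

Lemma Rabs_RInt_mul_cos_le (f : R -> R) a b lam M e : 0 < lam -> a + PI / lam <= b ->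
  (forall x, a <= x <= b -> continuous f x) ->
  (forall x, a <= x <= b -> Rabs (f x) <= M) ->
  (forall x, a <= x <= b - PI / lam -> Rabs (f x - f (x + PI / lam)) <= e) ->
  2 * Rabs (RInt (fun u => f u * cos (lam * u)) a b) <= (b - a) * e + 2 * M * (PI / lam).
Proof.
  intros Hlam Hab Hf HM He. pose proof PI_RGT_0.
  assert (Hd : 0 < PI / lam) by (apply Rdiv_lt_0_compat; lra).
  assert (He0 : 0 <= e) by (eapply Rle_trans; [apply Rabs_pos|apply (He a); lra]).
  assert (Hex : forall g x y, a <= x <= y -> y <= b -> (forall t, x <= t <= y -> continuous g t) ->
    ex_RInt (fun u => g u * cos (lam * u)) x y).
  { intros g x y Hxy Hy Hg. apply ex_RInt_of_continuous; [lra|]. intros t Ht.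
    apply (continuous_mult g (fun u => cos (lam * u))); [now apply Hg|apply continuous_cos_mul]. }
  rewrite <- (Rabs_right 2) at 1 by lra. rewrite <- Rabs_mult, RInt_mul_cos_shift by assumption.
  assert (Hmid : Rabs (RInt (fun u => (f u - f (u + PI / lam)) * cos (lam * u)) a (b - PI / lam))
                 <= (b - PI / lam - a) * e).
  { apply abs_RInt_le_const;
      [lra| |intros t Ht; eapply Rle_trans; [apply Rabs_mul_cos_le|apply He; lra]].
    apply (Hex (fun u => f u - f (u + PI / lam))); [lra|lra|]. intros t Ht.
    apply (continuous_minus f (fun u => f (u + PI / lam))); [apply Hf; lra|].
    apply (continuous_comp (fun u => u + PI / lam) f);
      [apply continuous_of_ex_derive; auto_derive; auto|apply Hf; lra]. }
  assert (Hend : forall x, a <= x -> x + PI / lam <= b ->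
    Rabs (RInt (fun u => f u * cos (lam * u)) x (x + PI / lam)) <= (x + PI / lam - x) * M).
  { intros x Hx Hxb. apply abs_RInt_le_const; [lra|apply Hex; [lra|lra|intros; apply Hf; lra]|].
    intros t Ht. eapply Rle_trans; [apply Rabs_mul_cos_le|apply HM; lra]. }
  pose proof (Hend a ltac:(lra) ltac:(lra)) as Hleft.
  pose proof (Hend (b - PI / lam) ltac:(lra) ltac:(lra)) as Hright.
  replace (b - PI / lam + PI / lam) with b in Hright by ring.
  eapply Rle_trans; [apply Rabs_triang|]. eapply Rle_trans; [apply Rplus_le_compat_r, Rabs_triang|].
  assert ((b - PI / lam - a) * e <= (b - a) * e) by (apply Rmult_le_compat_r; lra).
  lra.
Qed.

Lemma uniform_continuity_modulus (f : R -> R) a b e : 0 < e ->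
  (forall x, a <= x <= b -> continuous f x) ->
  exists d, 0 < d /\ forall x y, a <= x <= b -> a <= y <= b -> Rabs (y - x) < d ->
    Rabs (f x - f y) <= e.
Proof.
  intros He Hf. destruct (unifcont_1d f a b Hf (mkposreal e He)) as [[d Hd] Hunif].
  exists d. split; [exact Hd|]. intros x y Hx Hy Hxy. rewrite Rabs_minus_sym.
  destruct (Rle_lt_dec (Rabs (f y - f x)) e) as [Hle|Hlt]; [exact Hle|exfalso].
  apply (Hunif x y Hx Hy Hxy). intros Hball. change (Rabs (f y - f x) < e) in Hball. lra.
Qed.

Lemma RInt_mul_cos_vanishes (f : R -> R) a b : a < b ->
  (forall x, a <= x <= b -> continuous f x) ->
  forall eps, 0 < eps -> exists L, forall lam, L <= lam ->
    Rabs (RInt (fun u => f u * cos (lam * u)) a b) < eps.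
Proof.
  intros Hab Hf eps Heps. pose proof PI_RGT_0.
  destruct (continuity_ab_maj (fun x => Rabs (f x)) a b) as [xm [HM _]]; [lra| |].
  { intros x Hx. apply continuity_pt_filterlim, continuous_Rabs_comp. now apply Hf. }
  set (M := Rabs (f xm)) in HM. assert (HM0 : 0 <= M) by apply Rabs_pos.
  set (e := eps / (b - a)). assert (He : 0 < e) by (apply Rdiv_lt_0_compat; lra).
  destruct (uniform_continuity_modulus f a b e He Hf) as [d [Hd Hmod]].
  set (d0 := Rmin (Rmin (d / 2) (b - a)) (eps / (2 * (M + 1)))).
  assert (Hd0 : 0 < d0) by (repeat apply Rmin_pos; try apply Rdiv_lt_0_compat; lra).
  assert (Hd0le : d0 <= d / 2 /\ d0 <= b - a /\ d0 <= eps / (2 * (M + 1))).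
  { pose proof (Rmin_l (Rmin (d / 2) (b - a)) (eps / (2 * (M + 1)))).
    pose proof (Rmin_r (Rmin (d / 2) (b - a)) (eps / (2 * (M + 1)))).
    pose proof (Rmin_l (d / 2) (b - a)). pose proof (Rmin_r (d / 2) (b - a)). unfold d0. lra. }
  destruct Hd0le as (Hd0d & Hd0ba & Hd0eps).
  exists (PI / d0). intros lam Hlam.
  assert (0 < PI / d0) by (apply Rdiv_lt_0_compat; lra).
  assert (Hlam0 : 0 < lam) by lra.
  assert (Hdelta : PI / lam <= d0).
  { apply Rmult_le_reg_r with (lam / d0); [apply Rdiv_lt_0_compat; lra|].
    replace (PI / lam * (lam / d0)) with (PI / d0) by (field; lra).
    replace (d0 * (lam / d0)) with lam by (field; lra). exact Hlam. }
  assert (0 < PI / lam) by (apply Rdiv_lt_0_compat; lra).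
  assert (Hbound : 2 * Rabs (RInt (fun u => f u * cos (lam * u)) a b)
                   <= (b - a) * e + 2 * M * (PI / lam)).
  { apply Rabs_RInt_mul_cos_le; [lra|lra|exact Hf|intros; apply HM; lra|].
    intros x Hx. apply Hmod; [lra|lra|rewrite Rabs_right; lra]. }
  assert (Hbe : (b - a) * e = eps) by (unfold e; field; lra).
  assert (M * (PI / lam) < eps / 2).
  { apply Rle_lt_trans with (M * (eps / (2 * (M + 1)))); [apply Rmult_le_compat_l; lra|].
    apply Rmult_lt_reg_r with (2 * (M + 1)); [lra|]. field_simplify; lra. }
  lra.
Qed.

Lemma is_RInt_open01_mul_cos_vanishes (f : R -> R) M p : 0 < p -> continuous_open01 f ->
  endpoint_dominated f M p ->
  exists L : nat -> R,
    (forall n, is_RInt_open01 (fun u => f u * cos (2 * PI * INR n * u)) (L n)) /\ Un_cv L 0.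
Proof.
  intros Hp Hc [Hdom0 Hdom1]. pose proof PI_RGT_0.
  assert (Hcn : forall n, continuous_open01 (fun u => f u * cos (2 * PI * INR n * u))).
  { intros n x Hx. apply (continuous_mult f (fun u => cos (2 * PI * INR n * u)));
      [now apply Hc|apply continuous_cos_mul]. }
  assert (Hdn : forall n, endpoint_dominated (fun u => f u * cos (2 * PI * INR n * u)) M p).
  { intros n. split; intros x Hx; (eapply Rle_trans; [apply Rabs_mul_cos_le|]);
      [apply Hdom0|apply Hdom1]; lra. }
  set (F := fun n => is_RInt_open01_of_dominated _ M p Hp (Hcn n) (Hdn n)).
  exists (fun n => proj1_sig (F n)). split; [intros n; exact (proj1 (proj2_sig (F n)))|].
  intros eps He.
  destruct (Rpower_mul_small p (2 * (M / p)) (eps / 2) Hp) as [d [Hd Hsmall]]; [lra|].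
  set (a := Rmin d 1 / 4).
  assert (Ha : 0 < a <= 1 / 4 /\ a < d).
  { pose proof (Rmin_l d 1). pose proof (Rmin_r d 1). pose proof (Rmin_pos d 1 Hd ltac:(lra)).
    unfold a. lra. }
  destruct (RInt_mul_cos_vanishes f a (1 - a)) with (eps := eps / 2) as [Lam HLam];
    [lra|intros; apply Hc; lra|lra|].
  destruct (exists_nat_gt (Lam / (2 * PI))) as [N HN].
  exists N. intros n Hn%le_INR. unfold R_dist. rewrite Rminus_0_r.
  assert (Hlam : Lam <= 2 * PI * INR n).
  { apply Rmult_le_reg_r with (/ (2 * PI)); [apply Rinv_0_lt_compat; lra|].
    replace (2 * PI * INR n * / (2 * PI)) with (INR n) by (field; lra). unfold Rdiv in HN. lra. }
  specialize (HLam _ Hlam). specialize (Hsmall a ltac:(lra)).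
  destruct (proj2_sig (F n)) as [_ Htail]. specialize (Htail a (1 - a) ltac:(lra) ltac:(lra)).
  replace (1 - (1 - a)) with a in Htail by ring.
  set (l := proj1_sig (F n)) in *.
  replace l with ((l - RInt (fun u => f u * cos (2 * PI * INR n * u)) a (1 - a))
                  + RInt (fun u => f u * cos (2 * PI * INR n * u)) a (1 - a)) by ring.
  eapply Rle_lt_trans; [apply Rabs_triang|lra].
Qed.

Definition sin_moment (j : nat) : R :=
  match j with O => 0 | S _ => / (2 * PI * INR j) end.

Lemma one_sub_cos_mul_cot n u : sin (PI * u) <> 0 ->
  (1 - cos (2 * PI * INR n * u)) * cot (PI * u)
  = 2 * sum_f_R0 (fun j => sin (2 * PI * INR j * u)) n - sin (2 * PI * INR n * u).
Proof.
  intros Hsin. induction n as [|n IH].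
  - simpl. replace (2 * PI * 0 * u) with 0 by ring. rewrite cos_0, sin_0. ring.
  - rewrite tech5, S_INR.
    set (A := 2 * PI * INR n * u) in *. set (x := PI * u) in *.
    replace (2 * PI * (INR n + 1) * u) with (A + 2 * x) by (unfold A, x; ring).
    replace (sum_f_R0 (fun j => sin (2 * PI * INR j * u)) n) with (((1 - cos A) * cot x + sin A) / 2)
      by lra.
    unfold cot. rewrite cos_plus, sin_plus, cos_2a_sin, sin_2a.
    assert (Hcos2 : cos x * cos x = 1 - sin x * sin x)
      by (pose proof (sin2_cos2 x); unfold Rsqr in *; lra).
    field_simplify; [|exact Hsin|exact Hsin]. f_equal.
    replace (cos x ^ 2) with (cos x * cos x) by ring. rewrite Hcos2. ring.
Qed.

Lemma continuous_sin_mul lam x : continuous (fun u => sin (lam * u)) x.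
Proof. apply continuous_of_ex_derive. auto_derive. auto. Qed.

Lemma continuous_sin_sum n x :
  continuous (fun u => sum_f_R0 (fun j => sin (2 * PI * INR j * u)) n) x.
Proof.
  induction n as [|n IH]; [apply continuous_sin_mul|].
  apply (continuous_plus (fun u => sum_f_R0 (fun j => sin (2 * PI * INR j * u)) n)
                         (fun u => sin (2 * PI * INR (S n) * u))); [exact IH|apply continuous_sin_mul].
Qed.

Lemma is_RInt_sin_moment j : is_RInt (fun u => (1 - u) * sin (2 * PI * INR j * u)) 0 1 (sin_moment j).
Proof.
  destruct j as [|j].
  - apply (is_RInt_ext (fun _ => 0)).
    + intros x _. simpl. replace (2 * PI * 0 * x) with 0 by ring. rewrite sin_0. ring.
    + replace (sin_moment 0) with (scal (1 - 0) 0 : R) by (unfold scal; simpl; unfold mult; simpl; ring).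
      apply (@is_RInt_const R_NormedModule).
  - set (w := 2 * PI * INR (S j)).
    assert (Hw : 0 < w) by (pose proof PI_RGT_0; pose proof (lt_0_INR (S j) ltac:(lia)); unfold w; nra).
    replace (sin_moment (S j)) with (minus (- (1 - 1) * cos (w * 1) / w - sin (w * 1) / (w * w))
                                          (- (1 - 0) * cos (w * 0) / w - sin (w * 0) / (w * w))).
    + apply (is_RInt_derive (fun u => - (1 - u) * cos (w * u) / w - sin (w * u) / (w * w))).
      * intros x _. auto_derive; [auto|field; lra].
      * intros x _. apply (continuous_mult (fun u => 1 - u) (fun u => sin (w * u)));
          [apply continuous_of_ex_derive; auto_derive; auto|apply continuous_sin_mul].
    + assert (Hsw : sin w = 0).
      { pose proof (sin_period 0 (S j)) as Hp. rewrite Rplus_0_l, sin_0 in Hp.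
        rewrite <- Hp. unfold w. f_equal. ring. }
      change (sin_moment (S j)) with (/ w). unfold minus, plus, opp; simpl.
      rewrite Rmult_1_r, Rmult_0_r, cos_0, sin_0, Hsw. field. lra.
Qed.

Lemma is_RInt_sin_sum n :
  is_RInt (fun u => (1 - u) * sum_f_R0 (fun j => sin (2 * PI * INR j * u)) n) 0 1
    (sum_f_R0 sin_moment n).
Proof.
  induction n as [|n IH]; [exact (is_RInt_sin_moment 0)|].
  apply (is_RInt_ext (fun u => (1 - u) * sum_f_R0 (fun j => sin (2 * PI * INR j * u)) n
                               + (1 - u) * sin (2 * PI * INR (S n) * u))).
  - intros x _. rewrite tech5. symmetry. apply Rmult_plus_distr_l.
  - rewrite tech5. exact (is_RInt_plus _ _ 0 1 _ _ IH (is_RInt_sin_moment (S n))).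
Qed.

Lemma is_RInt_open01_one_sub_cos_cot n :
  is_RInt_open01 (fun u => (1 - u) * (1 - cos (2 * PI * INR n * u)) * cot (PI * u))
    (2 * sum_f_R0 sin_moment n - sin_moment n).
Proof.
  pose proof PI_RGT_0.
  apply (is_RInt_open01_ext (fun u => 2 * ((1 - u) * sum_f_R0 (fun j => sin (2 * PI * INR j * u)) n)
                                       - (1 - u) * sin (2 * PI * INR n * u))).
  { intros x Hx. symmetry. rewrite Rmult_assoc, one_sub_cos_mul_cot; [ring|].
    apply Rgt_not_eq, sin_gt_0; nra. }
  apply is_RInt_open01_of_is_RInt.
  - intros x _.
    apply (continuous_minus (fun u => 2 * ((1 - u) * sum_f_R0 (fun j => sin (2 * PI * INR j * u)) n))
                            (fun u => (1 - u) * sin (2 * PI * INR n * u))).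
    + apply (continuous_mult (fun _ => 2)); [apply continuous_const|].
      apply (continuous_mult (fun u => 1 - u)); [|apply continuous_sin_sum].
      apply continuous_of_ex_derive. auto_derive. auto.
    + apply (continuous_mult (fun u => 1 - u)); [|apply continuous_sin_mul].
      apply continuous_of_ex_derive. auto_derive. auto.
  - apply (@is_RInt_minus R_NormedModule); [|apply is_RInt_sin_moment].
    apply (is_RInt_scal _ _ _ 2 (sum_f_R0 sin_moment n)), is_RInt_sin_sum.
Qed.

Lemma harmonic_eq_sum_sin_moment n : harmonic (S n) = 2 * PI * sum_f_R0 sin_moment (S n).
Proof.
  unfold harmonic, sum_f. replace (S n - 1)%nat with n by lia. pose proof PI_RGT_0.
  induction n as [|n IH].
  - simpl. field. lra.
  - rewrite tech5, IH, (tech5 sin_moment (S n)).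
    replace (S n + 1)%nat with (S (S n)) by lia.
    change (sin_moment (S (S n))) with (/ (2 * PI * INR (S (S n)))).
    pose proof (lt_0_INR (S (S n)) ltac:(lia)). field. lra.
Qed.

Lemma Un_cv_const l : Un_cv (fun _ => l) l.
Proof. intros eps He. exists 0%nat. intros n _. unfold R_dist. rewrite Rminus_eq_0, Rabs_R0. lra. Qed.

Lemma sum_sin_moment_asymptotics g : is_euler_gamma g ->
  Un_cv (fun n => 2 * sum_f_R0 sin_moment n - sin_moment n - (g + ln (INR n)) / PI) 0.
Proof.
  (* Shift by one: [harmonic 0] is the junk value [1]. *)
  intros hg. pose proof PI_RGT_0. apply (CV_shift _ 1).
  apply (Un_cv_ext (fun n => (harmonic (n + 1) - ln (INR (n + 1)) - g) * / PI - / (2 * PI) * RinvN n)).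
  { intros n. rewrite Nat.add_1_r, harmonic_eq_sum_sin_moment. simpl pos.
    change (sin_moment (S n)) with (/ (2 * PI * INR (S n))). rewrite S_INR.
    pose proof (pos_INR n). field. lra. }
  replace 0 with ((g - g) * / PI - / (2 * PI) * 0) by ring.
  apply CV_minus; apply CV_mult; try apply Un_cv_const.
  - apply CV_minus; [exact (CV_shift' _ 1 _ hg)|apply Un_cv_const].
  - exact RinvN_cv.
Qed.

Lemma continuous_cot_PI x : 0 < x < 1 -> continuous (fun u => cot (PI * u)) x.
Proof.
  intros Hx. pose proof PI_RGT_0. unfold cot. apply continuous_of_ex_derive. auto_derive.
  apply Rgt_not_eq, sin_gt_0; nra.
Qed.

Section ReflectedPower.

Variables (kr c C : R) (P : R -> R).
Hypothesis kr_pos : 0 < kr.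
Hypothesis P_continuous : forall x, 0 < x -> continuous P x.
Hypothesis P_bound : forall x, 0 < x < 1 -> Rabs (P x) <= Rpower x kr.
Hypothesis P_near1 : forall x, 1 / 2 <= x < 1 -> Rabs (P x - c) <= C * (1 - x).

Definition cot_remainder (u : R) : R := (P (1 - u) - c * (1 - u)) * cot (PI * u).

Lemma cot_remainder_continuous : continuous_open01 cot_remainder.
Proof.
  intros x Hx.
  apply (continuous_mult (fun u => P (1 - u) - c * (1 - u))); [|now apply continuous_cot_PI].
  apply (continuous_minus (fun u => P (1 - u)) (fun u => c * (1 - u))).
  - apply continuous_reflect, P_continuous. lra.
  - apply continuous_of_ex_derive. auto_derive. auto.
Qed.

Lemma cot_remainder_dominated :
  endpoint_dominated cot_remainder (2 * Rabs C + 2 * Rabs c + 2) (Rmin kr 1).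
Proof.
  pose proof (Rmin_l kr 1). pose proof (Rmin_r kr 1).
  pose proof (Rabs_pos C). pose proof (Rabs_pos c).
  split; intros x Hx; unfold cot_remainder; rewrite Rabs_mult.
  - pose proof (Rabs_cot_PI_le x Hx) as Hcot.
    assert (Hnum : Rabs (P (1 - x) - c * (1 - x)) <= (Rabs C + Rabs c) * x).
    { replace (P (1 - x) - c * (1 - x)) with ((P (1 - x) - c) + c * x) by ring.
      eapply Rle_trans; [apply Rabs_triang|]. rewrite Rabs_mult, (Rabs_right x) by lra.
      pose proof (P_near1 (1 - x) ltac:(lra)) as Hc. replace (1 - (1 - x)) with x in Hc by ring.
      pose proof (Rle_abs C). nra. }
    assert (1 <= Rpower x (Rmin kr 1 - 1)) by (apply Rpower_ge_1; lra).
    assert (Rabs (P (1 - x) - c * (1 - x)) * Rabs (cot (PI * x)) <= (Rabs C + Rabs c) * x * (2 / x))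
      by (apply Rmult_le_compat; auto using Rabs_pos).
    replace ((Rabs C + Rabs c) * x * (2 / x)) with (2 * (Rabs C + Rabs c)) in * by (field; lra).
    nra.
  - pose proof (Rabs_cot_PI_le_near1 x Hx) as Hcot.
    assert (Hpow : Rpower (1 - x) kr = Rpower (1 - x) (kr - 1) * (1 - x)).
    { replace kr with ((kr - 1) + 1) at 1 by ring. rewrite Rpower_plus, Rpower_1 by lra. ring. }
    assert (Hnum : Rabs (P (1 - x) - c * (1 - x))
                   <= Rpower (1 - x) (kr - 1) * (1 - x) + Rabs c * (1 - x)).
    { eapply Rle_trans; [apply Rabs_triang|].
      rewrite Rabs_Ropp, Rabs_mult, (Rabs_right (1 - x)), <- Hpow by lra.
      pose proof (P_bound (1 - x) ltac:(lra)). lra. }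
    assert (1 <= Rpower (1 - x) (Rmin kr 1 - 1)) by (apply Rpower_ge_1; lra).
    assert (Rpower (1 - x) (kr - 1) <= Rpower (1 - x) (Rmin kr 1 - 1))
      by (apply Rpower_antitone_exp; lra).
    pose proof (Rpower_pos (1 - x) (kr - 1)).
    assert (Rabs (P (1 - x) - c * (1 - x)) * Rabs (cot (PI * x))
            <= (Rpower (1 - x) (kr - 1) * (1 - x) + Rabs c * (1 - x)) * (2 / (1 - x)))
      by (apply Rmult_le_compat; auto using Rabs_pos).
    replace ((Rpower (1 - x) (kr - 1) * (1 - x) + Rabs c * (1 - x)) * (2 / (1 - x)))
      with (2 * Rpower (1 - x) (kr - 1) + 2 * Rabs c) in * by (field; lra).
    nra.
Qed.

Lemma reflected_power_integrals : exists (l : R) (L : nat -> R),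
  (forall n, is_RInt_open01 (fun u => P (1 - u) * (1 - cos (2 * PI * INR n * u)) * cot (PI * u))
               (l - L n + c * (2 * sum_f_R0 sin_moment n - sin_moment n))) /\
  is_RInt_open01 (fun u => (P u - c * u) * cot (PI * u)) (- l) /\
  Un_cv L 0.
Proof.
  assert (Hp : 0 < Rmin kr 1) by (apply Rmin_pos; lra).
  destruct (is_RInt_open01_of_dominated cot_remainder _ _ Hp cot_remainder_continuous
              cot_remainder_dominated) as [l [Hl _]].
  destruct (is_RInt_open01_mul_cos_vanishes cot_remainder _ _ Hp cot_remainder_continuous
              cot_remainder_dominated) as [L [HL HLcv]].
  exists l, L. split; [|split; [|exact HLcv]].
  - intros n.
    replace (l - L n + c * (2 * sum_f_R0 sin_moment n - sin_moment n))
      with ((l + -1 * L n) + c * (2 * sum_f_R0 sin_moment n - sin_moment n)) by ring.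
    apply (is_RInt_open01_ext
      (fun u => (cot_remainder u + -1 * (cot_remainder u * cos (2 * PI * INR n * u)))
                + c * ((1 - u) * (1 - cos (2 * PI * INR n * u)) * cot (PI * u)))).
    { intros x _. unfold cot_remainder. ring. }
    apply is_RInt_open01_plus; [apply is_RInt_open01_plus; [exact Hl|]|];
      apply is_RInt_open01_scal; [apply HL|apply is_RInt_open01_one_sub_cos_cot].
  - replace (- l) with (-1 * l) by ring.
    apply (is_RInt_open01_ext (fun u => -1 * cot_remainder (1 - u))).
    { intros x _. unfold cot_remainder. rewrite cot_PI_reflect.
      replace (1 - (1 - x)) with x by ring. ring. }
    apply is_RInt_open01_scal, is_RInt_open01_reflect; [exact cot_remainder_continuous|exact Hl].
Qed.

End ReflectedPower.

Lemma continuous_cpow_re kr ki x : 0 < x -> continuous (fun t => cpow_re t kr ki) x.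
Proof. intros Hx. unfold cpow_re, Rpower. apply continuous_of_ex_derive. auto_derive. lra. Qed.

Lemma continuous_cpow_im kr ki x : 0 < x -> continuous (fun t => cpow_im t kr ki) x.
Proof. intros Hx. unfold cpow_im, Rpower. apply continuous_of_ex_derive. auto_derive. lra. Qed.

Lemma Rabs_Rpower_mul_le x k y : Rabs y <= 1 -> Rabs (Rpower x k * y) <= Rpower x k.
Proof.
  intros Hy. pose proof (Rpower_pos x k). pose proof (Rabs_pos y).
  rewrite Rabs_mult, (Rabs_right (Rpower x k)) by lra. nra.
Qed.

Lemma Rabs_cpow_re_le kr ki x : Rabs (cpow_re x kr ki) <= Rpower x kr.
Proof. apply Rabs_Rpower_mul_le. pose proof (COS_bound (ki * ln x)). apply Rabs_le; lra. Qed.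

Lemma Rabs_cpow_im_le kr ki x : Rabs (cpow_im x kr ki) <= Rpower x kr.
Proof. apply Rabs_Rpower_mul_le. pose proof (SIN_bound (ki * ln x)). apply Rabs_le; lra. Qed.

Lemma Rabs_Rpower_mul_log_le kr ki x y : 0 <= kr -> 1 / 2 <= x < 1 ->
  Rabs y <= Rabs (ki * ln x) -> Rabs (Rpower x kr * y) <= 2 * Rabs ki * (1 - x).
Proof.
  intros Hk Hx Hy.
  assert (Hpow : Rpower x kr <= 1) by (rewrite <- (Rpower_O x) by lra; apply Rpower_antitone_exp; lra).
  pose proof (Rpower_pos x kr). pose proof (Rabs_pos y). pose proof (Rabs_pos ki).
  pose proof (Rabs_ln_le_near1 x ltac:(lra)). rewrite Rabs_mult in Hy.
  assert (Rabs ki * Rabs (ln x) <= Rabs ki * (2 * (1 - x))) by (apply Rmult_le_compat_l; lra).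
  rewrite Rabs_mult, (Rabs_right (Rpower x kr)) by lra. nra.
Qed.

Lemma Rabs_cpow_re_sub1_le kr ki x : 0 < kr -> 1 / 2 <= x < 1 ->
  Rabs (cpow_re x kr ki - 1) <= (2 * Rabs ki + 2 * kr) * (1 - x).
Proof.
  intros Hk Hx. unfold cpow_re.
  replace (Rpower x kr * cos (ki * ln x) - 1)
    with (Rpower x kr * (cos (ki * ln x) - 1) + (Rpower x kr - 1)) by ring.
  eapply Rle_trans; [apply Rabs_triang|].
  pose proof (Rabs_Rpower_mul_log_le kr ki x (cos (ki * ln x) - 1) ltac:(lra) Hx
                (Rabs_cos_sub1_le _)).
  pose proof (Rabs_Rpower_sub1_le x kr ltac:(lra) ltac:(lra)). lra.
Qed.

Lemma Rabs_cpow_im_sub0_le kr ki x : 0 < kr -> 1 / 2 <= x < 1 ->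
  Rabs (cpow_im x kr ki - 0) <= 2 * Rabs ki * (1 - x).
Proof.
  intros Hk Hx. rewrite Rminus_0_r.
  exact (Rabs_Rpower_mul_log_le kr ki x _ ltac:(lra) Hx (Rabs_sin_le _)).
Qed.

Theorem mainTheorem5 (kr ki : R) (hk : 0 < kr) (g : R) (hg : is_euler_gamma g) :
  exists (Ire Iim : nat -> R) (Jre Jim : R),
    (forall n : nat, improper_int01 (F_re kr ki n) (Ire n) /\
                     improper_int01 (F_im kr ki n) (Iim n)) /\
    improper_int01 (G_re kr ki) Jre /\
    improper_int01 (G_im kr ki) Jim /\
    Un_cv (fun n => Ire n - ((g + ln (INR n)) / PI - Jre)) 0 /\
    Un_cv (fun n => Iim n - (0 - Jim)) 0.
Proof.
  destruct (reflected_power_integrals kr 1 (2 * Rabs ki + 2 * kr) (fun x => cpow_re x kr ki) hk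
              (continuous_cpow_re kr ki) (fun x _ => Rabs_cpow_re_le kr ki x)
              (fun x => Rabs_cpow_re_sub1_le kr ki x hk)) as (lr & Lr & HFr & HGr & HLr).
  destruct (reflected_power_integrals kr 0 (2 * Rabs ki) (fun x => cpow_im x kr ki) hk
              (continuous_cpow_im kr ki) (fun x _ => Rabs_cpow_im_le kr ki x)
              (fun x => Rabs_cpow_im_sub0_le kr ki x hk)) as (li & Li & HFi & HGi & HLi).
  set (kernel n := 2 * sum_f_R0 sin_moment n - sin_moment n) in *.
  exists (fun n => lr - Lr n + 1 * kernel n), (fun n => li - Li n + 0 * kernel n), (- lr), (- li).
  split; [|split; [|split; [|split]]]; try apply improper_int01_of_is_RInt_open01.
  - intros n. split; apply improper_int01_of_is_RInt_open01; [apply HFr|apply HFi].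
  - revert HGr. apply is_RInt_open01_ext. intros x _. unfold G_re. ring.
  - revert HGi. apply is_RInt_open01_ext. intros x _. unfold G_im. ring.
  - apply (Un_cv_ext (fun n => - Lr n + (kernel n - (g + ln (INR n)) / PI))); [intros n; ring|].
    replace 0 with (- 0 + 0) by ring.
    exact (CV_plus _ _ _ _ (CV_opp _ _ HLr) (sum_sin_moment_asymptotics g hg)).
  - apply (Un_cv_ext (fun n => - Li n)); [intros n; ring|].
    replace 0 with (- 0) by ring. exact (CV_opp _ _ HLi).
Qed.
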